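(* There exists $n_0$ such that for every $n\ge n_0$, the complete bipartite graph $K_{n,n}$ has no intersection representation in $\mathbb R^3$ by homothetic tetrahedra, i.e. there is no family of closed tetrahedra $\{\lambda_v P+w_v\}_{v\in V(K_{n,n})}$ (for a fixed tetrahedron $P\subset\mathbb R^3$, $\lambda_v>0$, $w_v\in\mathbb R^3$) such that for distinct vertices $u,v$ the tetrahedra of $u$ and $v$ intersect if and only if $uv$ is an edge of $K_{n,n}$. *)

From Stdlib Require Import Reals.
Open Scope R_scope.

Definition pt : Type := (R * R * R)%type.

Definition padd (x y : pt) : pt :=
  let '(x1, x2, x3) := x in let '(y1, y2, y3) := y in (x1 + y1, x2 + y2, x3 + y3).
Definition psub (x y : pt) : pt :=
  let '(x1, x2, x3) := x in let '(y1, y2, y3) := y in (x1 - y1, x2 - y2, x3 - y3).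
Definition pscale (c : R) (x : pt) : pt :=
  let '(x1, x2, x3) := x in (c * x1, c * x2, c * x3).

Definition det3 (a b c : pt) : R :=
  let '(a1, a2, a3) := a in let '(b1, b2, b3) := b in let '(c1, c2, c3) := c in
  a1 * (b2 * c3 - b3 * c2) - a2 * (b1 * c3 - b3 * c1) + a3 * (b1 * c2 - b2 * c1).

Record tetra : Type := Tetra {
  tv0 : pt; tv1 : pt; tv2 : pt; tv3 : pt;
  tetra_nondeg : det3 (psub tv1 tv0) (psub tv2 tv0) (psub tv3 tv0) <> 0
}.

Definition in_tetra (P : tetra) (x : pt) : Prop :=
  exists a b c d : R, 0 <= a /\ 0 <= b /\ 0 <= c /\ 0 <= d /\ a + b + c + d = 1 /\
    x = padd (padd (pscale a (tv0 P)) (pscale b (tv1 P)))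
             (padd (pscale c (tv2 P)) (pscale d (tv3 P))).

Definition in_homothet (P : tetra) (lam : R) (w : pt) (x : pt) : Prop :=
  exists y : pt, in_tetra P y /\ x = padd (pscale lam y) w.

Definition homothets_meet (P : tetra) (l1 : R) (w1 : pt) (l2 : R) (w2 : pt) : Prop :=
  exists x : pt, in_homothet P l1 w1 x /\ in_homothet P l2 w2 x.

Definition Knn_adj (n u v : nat) : Prop :=
  ((u < n)%nat /\ (n <= v < 2 * n)%nat) \/ ((v < n)%nat /\ (n <= u < 2 * n)%nat).

Definition homothet_rep_Knn (P : tetra) (n : nat) (lam : nat -> R) (w : nat -> pt) : Prop :=
  (forall v, (v < 2 * n)%nat -> 0 < lam v) /\
  (forall u v, (u < 2 * n)%nat -> (v < 2 * n)%nat -> u <> v ->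
     (homothets_meet P (lam u) (w u) (lam v) (w v) <-> Knn_adj n u v)).

(* Fix the tetrahedron P and let l_0, ..., l_3 be the linear
   functionals defining its facets, normalised so that l_0 + ... + l_3 = 0.
   The homothet  lam * P + w  (lam > 0) is then { x | l_c(x) <= s_c, c < 4 }
   for a "support vector" s in R^4, and conversely every vector with zero sum
   is the facet vector (l_c(x))_c of some point x.  Hence two homothets with
   support vectors s, t meet iff  sum_c min(s_c, t_c) >= 0.

   Colour each pair i < j of vertices of one part by the
   pattern { c | s(i)_c <= s(j)_c }, one of 16 colours.  In a part of more than
   2^16 vertices some path i < j < k is monochromatic.  If the pattern T
   realises min(s(i), s(j)) with negative sum, and also (same T) a negative
   sum for s(j), s(k), then every vector meeting both s(i) and s(k) has a
   strictly larger coordinate sum than the middle vector s(j).  Applying this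
   to a monochromatic path in each part gives  sum s(j) < sum s(j') < sum s(j),
   a contradiction. *)

From Stdlib Require Import Reals Lra Lia List FinFun Classical.

Local Open Scope nat_scope.

Fixpoint code (K : nat) (p : nat -> bool) : nat :=
  match K with
  | 0 => 0
  | S K => (if p 0 then 1 else 0) + 2 * code K (fun c => p (S c))
  end.

Lemma code_lt K : forall p, code K p < 2 ^ K.
Proof.
  induction K as [|K IH]; intros p; simpl; [lia|].
  specialize (IH (fun c => p (S c))). destruct (p 0); lia.
Qed.

Lemma code_inj K : forall p q, code K p = code K q -> forall c, c < K -> p c = q c.
Proof.
  induction K as [|K IH]; intros p q E c Hc; [lia|]. simpl in E.
  assert (Hhead : p 0 = q 0) by (destruct (p 0), (q 0); lia).
  assert (Htail : code K (fun c => p (S c)) = code K (fun c => q (S c)))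
    by (destruct (p 0), (q 0); lia).
  destruct c as [|c]; [exact Hhead|].
  apply (IH _ _ Htail c). lia.
Qed.

Lemma pigeonhole m M (f : nat -> nat) :
  (forall i, i < m -> f i < M) ->
  (forall i j, i < m -> j < m -> f i = f j -> i = j) -> m <= M.
Proof.
  intros Hrange Hinj.
  rewrite <- (length_seq m 0), <- (length_seq M 0), <- (length_map f).
  apply NoDup_incl_length.
  - apply Injective_map_NoDup_in; [|apply seq_NoDup].
    intros i j Hi Hj. apply in_seq in Hi, Hj. apply Hinj; lia.
  - intros y Hy. apply in_map_iff in Hy as [i [<- Hi]]. apply in_seq in Hi.
    apply in_seq. specialize (Hrange i ltac:(lia)). lia.
Qed.

(* Otherwise the set of colours
   of the pairs ending at j is injective in j: the colour of (j1, j2) occurs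
   at j2 but cannot occur at j1. *)
Lemma monochromatic_path K s m (col : nat -> nat -> nat) :
  (forall i j, col i j < K) -> 2 ^ K < m ->
  exists i j k, s <= i /\ i < j /\ j < k /\ k < s + m /\ col i j = col j k.
Proof.
  intros Hcol Hm.
  apply NNPP. intros Hnone.
  set (entering := fun j c => existsb (fun i => col i j =? c) (seq s (j - s))).
  assert (Hentering : forall j c,
    entering j c = true <-> exists i, s <= i < j /\ col i j = c).
  { intros j c. unfold entering. rewrite existsb_exists. split.
    - intros [i [Hin Heq]]. apply in_seq in Hin. apply Nat.eqb_eq in Heq.
      exists i. split; [lia | exact Heq].
    - intros [i [Hin Heq]]. exists i.
      split; [apply in_seq; lia | apply Nat.eqb_eq; exact Heq]. }
  set (f := fun t => code K (entering (s + t))).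
  assert (Hdistinct : forall t1 t2, t1 < t2 -> t2 < m -> f t1 <> f t2).
  { intros t1 t2 Hlt Ht2 E.
    pose proof (code_inj K _ _ E (col (s + t1) (s + t2)) (Hcol _ _)) as Esame.
    assert (Hin : entering (s + t2) (col (s + t1) (s + t2)) = true)
      by (apply Hentering; exists (s + t1); split; [lia | reflexivity]).
    rewrite <- Esame in Hin. apply Hentering in Hin as [h [Hh Eh]].
    apply Hnone. exists h, (s + t1), (s + t2). repeat split; lia. }
  assert (m <= 2 ^ K).
  { apply (pigeonhole m (2 ^ K) f).
    - intros i _. apply code_lt.
    - intros i j Hi Hj E. destruct (Nat.lt_total i j) as [Hlt|[Heq|Hgt]]; auto.
      + exfalso; exact (Hdistinct i j Hlt Hj E).
      + exfalso; exact (Hdistinct j i Hgt Hi (eq_sym E)). }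
  lia.
Qed.

Local Open Scope R_scope.

(* Vectors of R^4 are functions nat -> R read on the coordinates 0..3. *)
Definition sum4 (x : nat -> R) : R := x 0%nat + x 1%nat + x 2%nat + x 3%nat.

Definition mix (U : nat -> bool) (x y : nat -> R) : nat -> R :=
  fun c => if U c then x c else y c.

(* The pattern selecting the smaller coordinate, so that
   mix (minpat x y) x y is the coordinatewise minimum of x and y. *)
Definition minpat (x y : nat -> R) : nat -> bool :=
  fun c => if Rle_dec (x c) (y c) then true else false.

Definition min_sum (x y : nat -> R) : R := sum4 (mix (minpat x y) x y).

Definition overlap (x y : nat -> R) : Prop := forall U, 0 <= sum4 (mix U x y).

Lemma minpat_le x y c : mix (minpat x y) x y c <= x c /\ mix (minpat x y) x y c <= y c.
Proof. unfold mix, minpat. destruct (Rle_dec (x c) (y c)); lra. Qed.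

Lemma overlap_of_min_sum x y : 0 <= min_sum x y -> overlap x y.
Proof.
  intros H U. unfold min_sum, sum4 in *.
  pose proof (minpat_le x y 0). pose proof (minpat_le x y 1).
  pose proof (minpat_le x y 2). pose proof (minpat_le x y 3).
  unfold mix in *. destruct (U 0%nat), (U 1%nat), (U 2%nat), (U 3%nat); lra.
Qed.

Lemma sum4_mix_ext T T' x y : (forall c, (c < 4)%nat -> T c = T' c) ->
  sum4 (mix T x y) = sum4 (mix T' x y).
Proof.
  intros E. unfold sum4, mix.
  rewrite (E 0%nat), (E 1%nat), (E 2%nat), (E 3%nat) by lia. reflexivity.
Qed.

(* Indeed  sum b >= -(a1 on T) - (a3 off T) > sum a2. *)
Lemma middle_dominated T a1 a2 a3 b :
  sum4 (mix T a1 a2) < 0 -> sum4 (mix T a2 a3) < 0 ->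
  overlap a1 b -> overlap a3 b -> sum4 a2 < sum4 b.
Proof.
  intros N12 N23 O1 O3.
  specialize (O1 T). specialize (O3 (fun c => negb (T c))).
  unfold sum4, mix in *.
  destruct (T 0%nat), (T 1%nat), (T 2%nat), (T 3%nat); simpl in *; lra.
Qed.

Lemma separated_path_dominated x y z b :
  code 4 (minpat x y) = code 4 (minpat y z) ->
  min_sum x y < 0 -> min_sum y z < 0 -> overlap x b -> overlap z b ->
  sum4 y < sum4 b.
Proof.
  intros Ecol Sxy Syz Oxb Ozb.
  apply (middle_dominated (minpat x y) x y z b); auto.
  unfold min_sum in Syz.
  rewrite (sum4_mix_ext _ (minpat y z)); auto.
  intros c Hc. exact (code_inj 4 _ _ Ecol c Hc).
Qed.

(* Affine coordinates with respect to the frame (tv0 P; edges of P):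
   coordk P x is the k-th coordinate of the vector x in the edge basis. *)
Definition edge (P : tetra) (v : pt) : pt := psub v (tv0 P).
Definition vol (P : tetra) : R := det3 (edge P (tv1 P)) (edge P (tv2 P)) (edge P (tv3 P)).
Definition coord1 (P : tetra) (x : pt) : R := det3 x (edge P (tv2 P)) (edge P (tv3 P)) / vol P.
Definition coord2 (P : tetra) (x : pt) : R := det3 (edge P (tv1 P)) x (edge P (tv3 P)) / vol P.
Definition coord3 (P : tetra) (x : pt) : R := det3 (edge P (tv1 P)) (edge P (tv2 P)) x / vol P.

Definition facet (P : tetra) (x : pt) (c : nat) : R :=
  match c with
  | 0%nat => coord1 P x + coord2 P x + coord3 P x
  | 1%nat => - coord1 P x
  | 2%nat => - coord2 P x
  | _ => - coord3 P x
  end.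

Definition apex (P : tetra) (lam : R) (w : pt) : pt := padd (pscale lam (tv0 P)) w.

Definition facet_bound (P : tetra) (lam : R) (w : pt) (c : nat) : R :=
  facet P (apex P lam w) c + (if Nat.eqb c 0 then lam else 0).

Lemma facet_sum P x : sum4 (facet P x) = 0.
Proof. unfold sum4, facet. ring. Qed.

Definition convex4 (P : tetra) (a b c d : R) : pt :=
  padd (padd (pscale a (tv0 P)) (pscale b (tv1 P)))
       (padd (pscale c (tv2 P)) (pscale d (tv3 P))).

Lemma coords_in_homothet P lam w a b c d :
  a + b + c + d = 1 ->
  let x := padd (pscale lam (convex4 P a b c d)) w in
  coord1 P x - coord1 P (apex P lam w) = lam * b /\
  coord2 P x - coord2 P (apex P lam w) = lam * c /\
  coord3 P x - coord3 P (apex P lam w) = lam * d.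
Proof.
  intros Hs x; subst x.
  destruct P as [p0 p1 p2 p3 HD]; simpl in *.
  destruct p0 as [[x0 y0] z0], p1 as [[x1 y1] z1], p2 as [[x2 y2] z2],
           p3 as [[x3 y3] z3], w as [[w1 w2] w3].
  unfold apex, convex4, coord1, coord2, coord3, vol, edge in *; simpl in *.
  replace a with (1 - b - c - d) by lra.
  repeat split; field; exact HD.
Qed.

Lemma homothet_from_coords P lam w x : lam <> 0 ->
  let b := (coord1 P x - coord1 P (apex P lam w)) / lam in
  let c := (coord2 P x - coord2 P (apex P lam w)) / lam in
  let d := (coord3 P x - coord3 P (apex P lam w)) / lam in
  x = padd (pscale lam (convex4 P (1 - b - c - d) b c d)) w.
Proof.
  intros Hl b c d; subst b c d.
  destruct P as [p0 p1 p2 p3 HD]; simpl in *.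
  destruct p0 as [[x0 y0] z0], p1 as [[x1 y1] z1], p2 as [[x2 y2] z2],
           p3 as [[x3 y3] z3], w as [[w1 w2] w3], x as [[u1 u2] u3].
  unfold apex, convex4, coord1, coord2, coord3, vol, edge in *; simpl in *.
  f_equal; [f_equal|]; field; auto.
Qed.

Lemma in_homothet_facets P lam w x : 0 < lam ->
  in_homothet P lam w x <->
  forall c, (c < 4)%nat -> facet P x c <= facet_bound P lam w c.
Proof.
  intros Hl. split.
  - intros [y [[a [b [c [d [Ha [Hb [Hc [Hd [Hs ->]]]]]]]]] ->]] k _.
    destruct (coords_in_homothet P lam w a b c d Hs) as [E1 [E2 E3]].
    fold (convex4 P a b c d) in *.
    assert (0 <= lam * a) by (apply Rmult_le_pos; lra).
    assert (0 <= lam * b) by (apply Rmult_le_pos; lra).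
    assert (0 <= lam * c) by (apply Rmult_le_pos; lra).
    assert (0 <= lam * d) by (apply Rmult_le_pos; lra).
    assert (lam * a + lam * b + lam * c + lam * d = lam)
      by (replace lam with (lam * (a + b + c + d)) at 5 by (rewrite Hs; ring); ring).
    unfold facet_bound, facet. destruct k as [|[|[|k]]]; simpl; lra.
  - intros Hbound.
    pose proof (homothet_from_coords P lam w x ltac:(lra)) as Ex. simpl in Ex.
    set (b := (coord1 P x - coord1 P (apex P lam w)) / lam) in *.
    set (c := (coord2 P x - coord2 P (apex P lam w)) / lam) in *.
    set (d := (coord3 P x - coord3 P (apex P lam w)) / lam) in *.
    exists (convex4 P (1 - b - c - d) b c d). split; [|exact Ex].
    pose proof (Hbound 0%nat ltac:(lia)) as H0. pose proof (Hbound 1%nat ltac:(lia)) as H1.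
    pose proof (Hbound 2%nat ltac:(lia)) as H2. pose proof (Hbound 3%nat ltac:(lia)) as H3.
    unfold facet_bound, facet in H0, H1, H2, H3; simpl in H0, H1, H2, H3.
    assert (Hi : 0 < / lam) by (apply Rinv_0_lt_compat; lra).
    assert (0 <= b) by (unfold b, Rdiv; apply Rmult_le_pos; lra).
    assert (0 <= c) by (unfold c, Rdiv; apply Rmult_le_pos; lra).
    assert (0 <= d) by (unfold d, Rdiv; apply Rmult_le_pos; lra).
    assert (0 <= 1 - b - c - d).
    { replace (1 - b - c - d) with
        ((lam + (coord1 P (apex P lam w) + coord2 P (apex P lam w) + coord3 P (apex P lam w))
          - (coord1 P x + coord2 P x + coord3 P x)) / lam)
        by (unfold b, c, d; field; lra).
      unfold Rdiv; apply Rmult_le_pos; lra. }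
    exists (1 - b - c - d), b, c, d. repeat split; auto; ring.
Qed.

Definition facet_point (P : tetra) (z : nat -> R) : pt :=
  padd (padd (pscale (- z 1%nat) (edge P (tv1 P))) (pscale (- z 2%nat) (edge P (tv2 P))))
       (pscale (- z 3%nat) (edge P (tv3 P))).

Lemma facet_surjective P (z : nat -> R) : sum4 z = 0 ->
  forall c, (c < 4)%nat -> facet P (facet_point P z) c = z c.
Proof.
  intros Hz.
  assert (E : coord1 P (facet_point P z) = - z 1%nat /\
              coord2 P (facet_point P z) = - z 2%nat /\
              coord3 P (facet_point P z) = - z 3%nat).
  { destruct P as [p0 p1 p2 p3 HD]; simpl in *.
    destruct p0 as [[x0 y0] z0], p1 as [[x1 y1] z1], p2 as [[x2 y2] z2], p3 as [[x3 y3] z3].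
    unfold facet_point, coord1, coord2, coord3, vol, edge in *; simpl in *.
    repeat split; field; exact HD. }
  destruct E as [E1 [E2 E3]].
  intros [|[|[|[|c]]]] Hc; unfold facet; try lia;
    rewrite ?E1, ?E2, ?E3; unfold sum4 in Hz; lra.
Qed.

Lemma homothets_meet_iff P l1 w1 l2 w2 : 0 < l1 -> 0 < l2 ->
  homothets_meet P l1 w1 l2 w2 <->
  0 <= min_sum (facet_bound P l1 w1) (facet_bound P l2 w2).
Proof.
  intros H1 H2. unfold min_sum.
  set (b1 := facet_bound P l1 w1). set (b2 := facet_bound P l2 w2).
  set (m := mix (minpat b1 b2) b1 b2).
  split.
  - intros [x [Hx1 Hx2]].
    pose proof (proj1 (in_homothet_facets P l1 w1 x H1) Hx1) as F1.
    pose proof (proj1 (in_homothet_facets P l2 w2 x H2) Hx2) as F2.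
    assert (Hmin : forall c, (c < 4)%nat -> facet P x c <= m c).
    { intros c Hc. unfold m, mix, minpat. specialize (F1 c Hc). specialize (F2 c Hc).
      destruct (Rle_dec (b1 c) (b2 c)); auto. }
    pose proof (facet_sum P x). unfold sum4 in *.
    pose proof (Hmin 0%nat ltac:(lia)). pose proof (Hmin 1%nat ltac:(lia)).
    pose proof (Hmin 2%nat ltac:(lia)). pose proof (Hmin 3%nat ltac:(lia)). lra.
  - intros Hs.
    set (z := fun c => m c - sum4 m / 4).
    assert (Hz : sum4 z = 0) by (unfold z, sum4; field).
    exists (facet_point P z).
    split; [apply (in_homothet_facets P l1 w1 _ H1) | apply (in_homothet_facets P l2 w2 _ H2)];
      intros c Hc; rewrite (facet_surjective P z Hz c Hc); unfold z;
      assert (m c <= b1 c /\ m c <= b2 c) by apply minpat_le; fold b1 b2; lra.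
Qed.

Theorem mainTheorem4 :
  exists n0 : nat, forall n : nat, (n0 <= n)%nat ->
    forall (P : tetra) (lam : nat -> R) (w : nat -> pt),
      ~ homothet_rep_Knn P n lam w.
Proof.
  exists (S (2 ^ 16)). intros n Hn P lam w [Hpos Hrep].
  set (sigma := fun v => facet_bound P (lam v) (w v)).
  assert (Hmeet : forall u v, (u < 2 * n)%nat -> (v < 2 * n)%nat -> u <> v ->
    Knn_adj n u v -> overlap (sigma u) (sigma v)).
  { intros u v Hu Hv Huv Hadj. apply overlap_of_min_sum.
    apply homothets_meet_iff; try (apply Hpos; assumption).
    apply (Hrep u v Hu Hv Huv). exact Hadj. }
  assert (Hsep : forall u v, (u < 2 * n)%nat -> (v < 2 * n)%nat -> u <> v ->
    ~ Knn_adj n u v -> min_sum (sigma u) (sigma v) < 0).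
  { intros u v Hu Hv Huv Hadj. apply Rnot_le_lt. intros Hs.
    apply Hadj, (Hrep u v Hu Hv Huv), homothets_meet_iff; try (apply Hpos; assumption).
    exact Hs. }
  set (col := fun i j => code 4 (minpat (sigma i) (sigma j))).
  assert (Hcol : forall i j, (col i j < 16)%nat) by (intros; apply code_lt).
  destruct (monochromatic_path 16 0 n col Hcol ltac:(lia))
    as (a1 & a2 & a3 & ? & ? & ? & ? & Ea).
  destruct (monochromatic_path 16 n n col Hcol ltac:(lia))
    as (b1 & b2 & b3 & ? & ? & ? & ? & Eb).
  assert (sum4 (sigma a2) < sum4 (sigma b2)).
  { apply (separated_path_dominated (sigma a1) _ (sigma a3)); [exact Ea | ..];
      [apply Hsep | apply Hsep | apply Hmeet | apply Hmeet]; unfold Knn_adj; lia. }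
  assert (sum4 (sigma b2) < sum4 (sigma a2)).
  { apply (separated_path_dominated (sigma b1) _ (sigma b3)); [exact Eb | ..];
      [apply Hsep | apply Hsep | apply Hmeet | apply Hmeet]; unfold Knn_adj; lia. }
  lra.
Qed.
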